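(* Let $n\ge2$. For any set $X\subset\mathbb{S}$ there exist $c\in\mathbb{R}^n$ and $k\in\mathbb{R}$ such that the spherical cap $\mathcal{C}_{c,k}=\{x\in\mathbb{S}:c^Tx>k\}$ satisfies $\mathcal{C}_{c,k}\subset X$ and $\Delta(\mathcal{C}_{c,k})=\Delta(X)$.
   Context: $\mathbb{S}$ and $\mathbb{B}$ are the Euclidean unit sphere and closed unit ball of $\mathbb{R}^n$. For $X\subset\mathbb{S}$, $\Delta(X)=\sup\{r\in[0,1]: r\mathbb{B}\subset\mathrm{conv}(\mathbb{S}\setminus X)\}$, with the supremum of the empty set taken as $0$. *)

From HB Require Import structures.
From mathcomp Require Import all_boot all_order all_algebra.
From mathcomp Require Import boolp classical_sets reals.
Set Implicit Arguments. Unset Strict Implicit. Unset Printing Implicit Defensive.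
Import Order.TTheory GRing.Theory Num.Theory.
Local Open Scope ring_scope.
Local Open Scope classical_set_scope.

Section Defs.
Variables (R : realType) (n : nat).

Definition dotp (x y : 'rV[R]_n) : R := \sum_(i < n) x 0 i * y 0 i.

Definition usphere : set 'rV[R]_n := [set x | dotp x x = 1].
Definition uball : set 'rV[R]_n := [set x | dotp x x <= 1].

Definition scaled_ball (r : R) : set 'rV[R]_n :=
  [set y | exists2 x, uball x & y = r *: x].

Definition conv (A : set 'rV[R]_n) : set 'rV[R]_n :=
  [set x | exists m (w : 'I_m -> R) (p : 'I_m -> 'rV[R]_n),
     [/\ forall i, 0 <= w i, \sum_(i < m) w i = 1, forall i, A (p i)
       & x = \sum_(i < m) w i *: p i]].

(* Delta(X) = sup { r in [0,1] : r B ⊂ conv(S \ X) }; sup set0 = 0 in reals.v *)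
Definition Delta (X : set 'rV[R]_n) : R :=
  sup [set r : R | 0 <= r <= 1 /\ scaled_ball r `<=` conv (usphere `\` X)].

Definition cap (c : 'rV[R]_n) (k : R) : set 'rV[R]_n :=
  [set x | usphere x /\ k < dotp c x].

End Defs.

(* Let d = Delta(X).  The point is that some unit vector c satisfies c.y <= d on
   S \ X.  Otherwise compactness of S yields finitely many y_j in S \ X and e > 0
   with max_j u.y_j > d + e for every unit u; separating a point of (d + e)B from
   the polytope conv{y_j} by its nearest point then puts (d + e)B inside conv(S \ X),
   against the definition of d.  For such c the cap C_{c,d} lies in X, so
   Delta(C_{c,d}) >= d, and conv(S \ C_{c,d}) lies in the half-space c.y <= d,
   which contains r c only for r <= d. *)

From HB Require Import structures.
From mathcomp Require Import all_boot all_order all_algebra.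
From mathcomp Require Import boolp classical_sets reals.
From mathcomp Require Import topology normedtype derive.
From mathcomp Require Import lra.
Import Order.TTheory GRing.Theory Num.Theory.
Import numFieldNormedType.Exports.
Local Open Scope ring_scope.
Local Open Scope classical_set_scope.
Set Implicit Arguments. Unset Strict Implicit.

Section Dotp.
Variables (R : realType) (n : nat).
Implicit Types (x y z : 'rV[R]_n) (a s : R).
Local Notation dp := (@dotp R n).

Lemma dotpC x y : dp x y = dp y x.
Proof. by apply: eq_bigr => i _; rewrite mulrC. Qed.

Lemma dotpDl x y z : dp (x + y) z = dp x z + dp y z.
Proof. by rewrite /dotp -big_split; apply: eq_bigr => i _; rewrite mxE mulrDl. Qed.

Lemma dotpZl a x y : dp (a *: x) y = a * dp x y.
Proof. by rewrite /dotp mulr_sumr; apply: eq_bigr => i _; rewrite mxE mulrA. Qed.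

Lemma dotpBl x y z : dp (x - y) z = dp x z - dp y z.
Proof. by rewrite dotpDl -scaleN1r dotpZl mulN1r. Qed.

Lemma dotpZr a x y : dp x (a *: y) = a * dp x y.
Proof. by rewrite dotpC dotpZl dotpC. Qed.

Lemma dotpBr x y z : dp x (y - z) = dp x y - dp x z.
Proof. by rewrite dotpC dotpBl !(dotpC x). Qed.

Lemma dotp_suml m (w : 'I_m -> R) (p : 'I_m -> 'rV[R]_n) y :
  dp (\sum_(i < m) w i *: p i) y = \sum_(i < m) w i * dp (p i) y.
Proof.
elim: m w p => [|m IH] w p.
  by rewrite !big_ord0 /dotp big1 // => i _; rewrite mxE mul0r.
by rewrite !big_ord_recr /= dotpDl dotpZl IH.
Qed.

Lemma dotp_ge0 x : 0 <= dp x x.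
Proof. by apply: sumr_ge0 => i _; rewrite -expr2 sqr_ge0. Qed.

Lemma dotp_eq0 x : (dp x x == 0) = (x == 0).
Proof.
apply/idP/eqP => [/eqP x0|->]; last by rewrite /dotp big1 // => i _; rewrite mxE mul0r.
apply/rowP => j; apply/eqP; rewrite mxE -sqrf_eq0 expr2.
by move/psumr_eq0P: x0 => -> // k _; rewrite -expr2 sqr_ge0.
Qed.

Lemma dotp_unit_le u x s : dp u u = 1 -> 0 <= s -> dp x x <= s ^+ 2 -> dp u x <= s.
Proof.
move=> uu s0 xs.
have cs : dp u x ^+ 2 <= dp x x.
  have := dotp_ge0 (x - dp u x *: u).
  rewrite !dotpBl !dotpBr !dotpZl !dotpZr uu (dotpC x u); lra.
rewrite leNgt; apply/negP => lt_s.
have : s ^+ 2 < dp u x ^+ 2 by rewrite ltr_pXn2r // nnegrE (le_trans s0 (ltW lt_s)).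
lra.
Qed.

Lemma exists_unit_vector : (0 < n)%N -> exists u, dp u u = 1.
Proof.
move=> n0; exists (delta_mx 0 (Ordinal n0)); rewrite /dotp (bigD1 (Ordinal n0)) //=.
rewrite big1 ?addr0 ?mxE ?eqxx ?mulr1 // => k /negbTE kn0.
by rewrite mxE kn0 andbF mul0r.
Qed.

Lemma unit_normalize c : c != 0 -> exists2 u, dp u u = 1 & exists2 a, 0 < a & c = a *: u.
Proof.
rewrite -dotp_eq0 => c0; have cc_gt0 : 0 < dp c c by rewrite lt_def c0 dotp_ge0.
set a := Num.sqrt (dp c c); have a_gt0 : 0 < a by rewrite sqrtr_gt0.
exists (a^-1 *: c); last by exists a; rewrite // scalerA divff ?gt_eqF ?scale1r.
by rewrite dotpZl dotpZr mulrA -invfM -expr2 sqr_sqrtr ?ltW // mulVf.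
Qed.

Lemma conv_halfspace (A : set 'rV[R]_n) c k x :
  (forall y, A y -> dp c y <= k) -> conv A x -> dp c x <= k.
Proof.
move=> Ak [m [w [p [w0 w1 Ap ->]]]].
rewrite dotpC dotp_suml -[k]mul1r -w1 mulr_suml; apply: ler_sum => i _.
by apply: ler_wpM2l => //; rewrite dotpC Ak.
Qed.

Lemma min_dist_dotp_le0 c v :
  (forall t, 0 < t <= 1 -> dp c c <= dp (c - t *: v) (c - t *: v)) ->
  dp c v <= 0.
Proof.
move=> cmin; rewrite leNgt; apply/negP => cv_gt0; have vv_ge0 := dotp_ge0 v.
(* any t in (0, 1] with t v.v < c.v contradicts 2 c.v <= t v.v *)
pose t := dp c v / (dp c v + dp v v).
have t_gt0 : 0 < t by rewrite divr_gt0 // ltr_wpDr.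
have t_le1 : t <= 1 by rewrite ler_pdivrMr ?mul1r ?lerDl // ltr_wpDr.
have := cmin t; rewrite t_gt0 t_le1 => /(_ isT).
rewrite !dotpBl !dotpBr !dotpZl !dotpZr (dotpC v c) => ineq.
have tvv : t * dp v v < dp c v.
  by rewrite /t mulrAC ltr_pdivrMr ?ltr_wpDr //; nra.
have : 2 * dp c v <= t * dp v v by rewrite -(ler_pM2l t_gt0); nra.
lra.
Qed.

End Dotp.

Section Compactness.
Variable R : realType.

Lemma continuous_dotp (T : topologicalType) n (f g : T -> 'rV[R]_n) :
  continuous f -> continuous g -> continuous (fun t => dotp (f t) (g t)).
Proof.
move=> cf cg; apply: continuous_big => [|i _ t]; first exact: add_continuous.
by apply: continuousM; [exact: continuous_comp (cf t) (@coord_continuous R 1 n 0 i _)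
  |exact: continuous_comp (cg t) (@coord_continuous R 1 n 0 i _)].
Qed.

Lemma compact_in_cube m (A : set 'rV[R]_m) (a b : R) :
  closed A -> (forall v, A v -> forall i, a <= v 0 i <= b) -> compact A.
Proof.
move=> Acl Ab.
have cube := @rV_compact R m (fun=> `[a, b]%classic) (fun=> @segment_compact R a b).
by apply: subclosed_compact Acl cube _ => v Av i; rewrite /= in_itv /= Ab.
Qed.

Lemma compact_usphere n : compact (@usphere R n).
Proof.
apply: compact_in_cube (-1) 1 _ _.
  apply: (@preimage_closed _ R (fun v => dotp v v) [set x | x = 1]); last exact: closed_eq.
  by move=> v _; apply: continuous_dotp => w; exact: cvg_id.
move=> v vv i; rewrite -ler_norml -(expr_le1 (n := 2)) // -normrX ger0_norm ?sqr_ge0 //.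
rewrite -vv /dotp (bigD1 i) //= -expr2 lerDl.
by apply: sumr_ge0 => k _; rewrite -expr2 sqr_ge0.
Qed.

Definition simplex m : set 'rV[R]_m :=
  [set w | (forall j, 0 <= w 0 j) /\ \sum_(j < m) w 0 j = 1].
Arguments simplex : clear implicits.

Lemma compact_simplex m : compact (simplex m).
Proof.
apply: compact_in_cube 0 1 _ _; last first.
  move=> w [w0 w1] j; rewrite w0 -w1 (bigD1 j) //= lerDl.
  by apply: sumr_ge0 => k _.
have cw j : continuous (fun w : 'rV[R]_m => w 0 j) by exact: coord_continuous.
apply: closedI.
  have := closed_bigI (D := setT)
    (fun j _ => preimage_closed (fun w _ => cw j w) (@closed_ge R 0)).
  by congr closed; apply/seteqP; split => w /= wj j; [exact: wj|move=> _; exact: wj].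
apply: (@preimage_closed _ R (fun w : 'rV[R]_m => \sum_(j < m) w 0 j) [set x | x = 1]).
  by move=> w _; apply: continuous_big => [|j _]; [exact: add_continuous|exact: cw].
exact: closed_eq.
Qed.

End Compactness.
Arguments simplex {R} m.

Section Separation.
Variables (R : realType) (n N : nat) (Y : 'I_N -> 'rV[R]_n).
Implicit Types (w : 'rV[R]_N) (t : R).
Local Notation dp := (@dotp R n).

Definition combination (w : 'rV[R]_N) : 'rV[R]_n := \sum_(j < N) w 0 j *: Y j.

Lemma continuous_combination : continuous combination.
Proof.
apply: continuous_big => [|j _ w]; first exact: add_continuous.
by apply: continuousZr_tmp; exact: coord_continuous.
Qed.

Lemma combination_conv (A : set 'rV[R]_n) w :
  (forall j, A (Y j)) -> simplex N w -> conv A (combination w).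
Proof. by move=> AY [w0 w1]; exists N, (fun j => w 0 j), Y. Qed.

Lemma simplex_delta j : simplex N (delta_mx 0 j : 'rV[R]_N).
Proof.
split=> [k|]; first by rewrite mxE; case: (_ && _).
rewrite (bigD1 j) //= mxE !eqxx big1 ?addr0 // => k /negbTE kj.
by rewrite mxE kj andbF.
Qed.

Lemma combination_delta j : combination (delta_mx 0 j) = Y j.
Proof.
rewrite /combination (bigD1 j) //= mxE !eqxx scale1r big1 ?addr0 // => k /negbTE kj.
by rewrite mxE kj andbF scale0r.
Qed.

Lemma simplex_lerp w w' t :
  simplex N w -> simplex N w' -> 0 <= t <= 1 ->
  simplex N ((1 - t) *: w + t *: w').
Proof.
move=> [w0 w1] [w'0 w'1] /andP[t0 t1]; split=> [k|].
  by rewrite !mxE addr_ge0 ?mulr_ge0 ?subr_ge0.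
under eq_bigr do rewrite !mxE.
by rewrite big_split /= -!mulr_sumr w1 w'1 !mulr1 subrK.
Qed.

Lemma combination_lerp w w' t :
  combination ((1 - t) *: w + t *: w') =
  combination w + t *: (combination w' - combination w).
Proof.
rewrite /combination; under eq_bigr do rewrite !mxE scalerDl -!scalerA.
by rewrite big_split /= -!scaler_sumr scalerBl scale1r scalerBr addrAC addrA.
Qed.

Lemma conv_separation (A : set 'rV[R]_n) p :
  (0 < N)%N -> (forall j, A (Y j)) -> ~ conv A p ->
  exists2 c, c != 0 & forall j, dp c (Y j) < dp c p.
Proof.
move=> N_gt0 AY pA.
pose dist2 w := dp (p - combination w) (p - combination w).
have [| | |w + wmin] := @EVT_min_rV R N dist2 (simplex N).
- by exists (delta_mx 0 (Ordinal N_gt0)); exact: simplex_delta.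
- exact: compact_simplex.
- apply: continuous_subspaceT => w; apply: continuous_dotp => v;
    by apply: continuousB; [exact: cst_continuous|exact: continuous_combination].
rewrite inE => Sw; set q := combination w.
have pq0 : p - q != 0.
  by rewrite subr_eq0; apply: contra_notN pA => /eqP ->; exact: combination_conv.
exists (p - q) => // j.
have obtuse : dp (p - q) (Y j - q) <= 0.
  apply: min_dist_dotp_le0 => t /andP[/ltW t0 t1].
  have := wmin ((1 - t) *: w + t *: delta_mx 0 j).
  rewrite /dist2 inE combination_lerp combination_delta -/q opprD addrA.
  by apply; apply: simplex_lerp => //; [exact: simplex_delta|rewrite t0].
move: obtuse; rewrite dotpBr.
have : 0 < dp (p - q) (p - q) by rewrite lt_def dotp_eq0 pq0 dotp_ge0.
rewrite [X in _ < X -> _]dotpBr; lra.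
Qed.

Lemma scaled_ball_sub_conv (A : set 'rV[R]_n) s :
  0 <= s -> (0 < N)%N -> (forall j, A (Y j)) ->
  (forall u, dp u u = 1 -> exists j, s < dp u (Y j)) ->
  scaled_ball s `<=` conv A.
Proof.
move=> s0 N_gt0 AY Ys _ [x xB ->]; apply: contrapT => sxA.
have [c c0 sep] := conv_separation N_gt0 AY sxA.
have [u uu [a a_gt0 ca]] := unit_normalize c0.
have [j sYj] := Ys u uu.
have : dp u (s *: x) <= s.
  apply: dotp_unit_le uu s0 _; rewrite dotpZl dotpZr.
  by move: xB (dotp_ge0 x); rewrite /uball /=; nra.
have := sep j; rewrite ca !dotpZl ltr_pM2l //; lra.
Qed.

End Separation.

Section Delta.
Variables (R : realType) (n : nat).
Implicit Types (A X Z : set 'rV[R]_n) (d k r s : R).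
Local Notation dp := (@dotp R n).

Lemma conv_larger_ball A d :
  (0 < n)%N -> 0 <= d -> (forall u, dp u u = 1 -> exists2 y, A y & d < dp u y) ->
  exists2 s, d < s & scaled_ball s `<=` conv A.
Proof.
move=> n_gt0 d_ge0 Ad.
pose D := [set ye : 'rV[R]_n * R | A ye.1 /\ 0 < ye.2].
pose f (ye : 'rV[R]_n * R) := [set u | d + ye.2 < dp u ye.1].
have [D' D'D cover] : finite_subset_cover D f (@usphere R n).
  move: (@compact_usphere R n); rewrite compact_cover; apply.
    move=> [y e] _; apply: open_comp (@open_gt _ _) => u _ /=.
    by apply: continuous_dotp => [v|]; [exact: cvg_id|exact: cst_continuous].
  move=> u uu; have [y Ay dy] := Ad u uu.
  exists (y, (dp u y - d) / 2); rewrite /D /f /=; last lra.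
  by split=> //; rewrite divr_gt0 // subr_gt0.
pose l := finmap.enum_fset D'.
pose e := \big[Num.min/1]_(ye <- l) ye.2.
have e_gt0 : 0 < e.
  rewrite /e big_seq; apply: lt_bigmin => // ye /D'D.
  by rewrite inE => -[].
pose Y (j : 'I_(size l)) := (nth (0, 0) l j).1.
have Ys u : dp u u = 1 -> exists j, d + e < dp u (Y j).
  move=> uu; have [ye ye_l fye] := cover u uu.
  have ye_idx : (index ye l < size l)%N by rewrite index_mem.
  exists (Ordinal ye_idx); rewrite /Y /= nth_index //.
  have : e <= ye.2 by exact: ge_bigmin_seq.
  by move: fye; rewrite /f /=; lra.
exists (d + e); first by rewrite ltrDl.
have [u0 /Ys [j0 _]] := exists_unit_vector R n_gt0.
apply: (@scaled_ball_sub_conv R n (size l) Y) _ _ _ Ys.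
- by rewrite addr_ge0 // ltW.
- exact: leq_ltn_trans (leq0n j0) (ltn_ord j0).
- move=> j; have /D'D := mem_nth (0, 0) (ltn_ord j).
  by rewrite inE => -[].
Qed.

Lemma conv_mono A Z : A `<=` Z -> conv A `<=` conv Z.
Proof. by move=> AZ x [m [w [p [w0 w1 Ap ->]]]]; exists m, w, p; split=> // i; apply: AZ. Qed.

Lemma scaled_ball_conv_le A u k r :
  dp u u = 1 -> (forall y, A y -> dp u y <= k) -> scaled_ball r `<=` conv A -> r <= k.
Proof.
move=> uu Ak rA; have := conv_halfspace Ak (rA (r *: u) _).
by rewrite dotpZr uu mulr1; apply; exists u; rewrite // /uball /= uu.
Qed.

Lemma le_Delta X r :
  0 <= r <= 1 -> scaled_ball r `<=` conv (@usphere R n `\` X) -> r <= Delta X.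
Proof.
move=> r01 rX; apply: sup_upper_bound => //; split; first by exists r.
by exists 1 => s [/andP[]].
Qed.

Lemma Delta_le X k :
  0 <= k ->
  (forall r, 0 <= r <= 1 -> scaled_ball r `<=` conv (@usphere R n `\` X) -> r <= k) ->
  Delta X <= k.
Proof.
rewrite /Delta; set E := [set r | _]; move=> k_ge0 Ek.
have [->|E0] := eqVneq E set0; first by rewrite sup0.
by apply: ge_sup; [exact/set0P|move=> r [r01 rX]; exact: Ek].
Qed.

Lemma Delta_ge0 X : 0 <= Delta X.
Proof.
rewrite /Delta; set E := [set r | _].
have [->|/set0P[r [r01 rX]]] := eqVneq E set0; first by rewrite sup0.
by apply: le_trans (le_Delta r01 rX); case/andP: r01.
Qed.

Lemma Delta_subset X Z : Z `<=` X -> Delta X <= Delta Z.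
Proof.
move=> ZX; apply: Delta_le (Delta_ge0 Z) _ => r r01 rX; apply: le_Delta r01 _.
by apply: subset_trans rX (conv_mono _) => y [Sy Xy]; split=> // /ZX.
Qed.

End Delta.

Theorem lemma2 (R : realType) (n : nat) (hn : (2 <= n)%N)
  (X : set 'rV[R]_n) (hX : X `<=` @usphere R n) :
  exists (c : 'rV[R]_n) (k : R), cap c k `<=` X /\ Delta (cap c k) = Delta X.
Proof.
have n_gt0 : (0 < n)%N := ltnW hn.
set d := Delta X.
have [c cc cX] : exists2 c : 'rV[R]_n,
    dotp c c = 1 & forall y, (@usphere R n `\` X) y -> dotp c y <= d.
  apply: contrapT => no_c.
  have [s ds sX] : exists2 s, d < s & scaled_ball s `<=` conv (@usphere R n `\` X).
    apply: conv_larger_ball n_gt0 (Delta_ge0 X) _ => u uu; apply: contrapT => no_y.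
    apply: no_c; exists u => // y Sy; rewrite leNgt; apply/negP => dy.
    by apply: no_y; exists y.
  have [u uu] := exists_unit_vector R n_gt0.
  have s_le1 : s <= 1.
    apply: (scaled_ball_conv_le uu _ sX) => y [Sy _].
    by apply: dotp_unit_le uu ler01 _; rewrite Sy expr1n.
  have := le_Delta _ sX; rewrite s_le1 (le_trans (Delta_ge0 X) (ltW ds)) => /(_ isT).
  by rewrite -/d; lra.
have capX : cap c d `<=` X.
  move=> x [Sx dx]; apply: contrapT => Xx.
  by have := cX x (conj Sx Xx); rewrite leNgt dx.
exists c, d; split=> //; apply: le_anti; rewrite (Delta_subset capX) andbT.
apply: Delta_le (Delta_ge0 X) _ => r _; apply: scaled_ball_conv_le cc _.
by move=> y [Sy ncap]; rewrite leNgt; apply/negP => dy; apply: ncap.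
Qed.
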